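(* When the segment-based (GK) algorithm described in the context is run, after the deletion step at any time step $t$, the number of type-2 elements stored in QS is $O(\ell\log t)$.
   Context: A stream of elements from a totally ordered universe arrives one by one. Let $\ell=1/\varepsilon$ be an integer. The stream is partitioned into consecutive chunks of $\ell$ elements; time step $t$ is the arrival of the $t$-th chunk, and $t_0(x)$ is the time step in which $x$ arrives. The summary QS stores elements $e_1<\dots<e_s$ seen so far, each with integers $\mathrm{rmin}(e),\mathrm{rmax}(e)$; by convention $\mathrm{rmin}(e_0)=0$. An element $+\infty$, larger than all others, is inserted at the start of the stream and is always stored as $e_s$. Insert$(x)$: let $e_i$ be the smallest stored element with $e_i>x$; set $\mathrm{rmin}(x)=\mathrm{rmin}(e_{i-1})+1$, $\mathrm{rmax}(x)=\mathrm{rmax}(e_i)$, increase $\mathrm{rmin}(e_j),\mathrm{rmax}(e_j)$ by one for all $j\ge i$, and store $x$. Delete$(e_i)$: remove $e_i$, leaving all other values unchanged. Define $g_i=\mathrm{rmin}(e_i)-\mathrm{rmin}(e_{i-1})$ and $\Delta_i=\mathrm{rmax}(e_i)-\mathrm{rmin}(e_i)$. Band values: each element $x$ has an integer $\mathbf{v}(x)$: at time step $t_0(x)$, $\mathbf{v}(x)=0$; at each time step $t>t_0(x)$, if $t$ is a multiple of $2^{\mathbf{v}(x)}$ then $\mathbf{v}(x)$ is increased by one. The segment $\mathrm{seg}(e_i)$ of a stored element $e_i$ is the maximal set of consecutive stored elements $e_j,\dots,e_{i-1}$ all with band value strictly less than $\mathbf{v}(e_i)$; $g^*_i=g_i+\sum_{e_k\in\mathrm{seg}(e_i)}g_k$.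 Algorithm: at each time step $t$: (i) run Insert on each element of the chunk; (ii) (deletion step) while there is a stored $e_i$ ($i<s$) with $\mathbf{v}(e_i)\le\mathbf{v}(e_{i+1})$ and $g^*_i+g_{i+1}+\Delta_{i+1}\le t$, run Delete on $e_i$ and on every element of $\mathrm{seg}(e_i)$. After the deletion step at time $t$, a stored element $e_i$ ($i<s$) is type-1 if $\mathbf{v}(e_i)>\mathbf{v}(e_{i+1})$, and type-2 if it is not type-1 (in which case $g^*_i+g_{i+1}+\Delta_{i+1}>t$). *)

From mathcomp Require Import all_boot all_order all_algebra.
Set Implicit Arguments. Unset Strict Implicit. Unset Printing Implicit Defensive.
Import Order.TTheory GRing.Theory Num.Theory.

Section GK.
Variables (disp : Order.disp_t) (T : orderType disp).

(* A stored element: its value (None = +infinity), rmin, rmax, and the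
   time step t0 in which it arrived. *)
Record entry := Entry { ev : option T; ermin : nat; ermax : nat; et0 : nat }.

(* +infinity: inserted at the start of the stream (time step 0),
   rmin = rmax = 1 (it is the only element seen so far). *)
Definition inf_entry : entry := Entry None 1 1 0.

Definition gtx (x : T) (e : entry) : bool :=
  if ev e is Some y then (x < y)%O else true.

Definition dflt_entry : entry := inf_entry.
Definition Q_at (Q : seq entry) (i : nat) : entry := nth dflt_entry Q i.

(* Insert(x); positions are 0-based: position p is e_{p+1}. *)
Definition insert_elem (t : nat) (x : T) (Q : seq entry) : seq entry :=
  let i := find (gtx x) Q in
  let rmin_prev := if i is i'.+1 then ermin (Q_at Q i') else 0 in
  let newe := Entry (Some x) rmin_prev.+1 (ermax (Q_at Q i)) t in
  let incr e := Entry (ev e) (ermin e).+1 (ermax e).+1 (et0 e) in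
  take i Q ++ newe :: map incr (drop i Q).

Definition insert_chunk (t : nat) (c : seq T) (Q : seq entry) : seq entry :=
  foldl (fun Q x => insert_elem t x Q) Q c.

Fixpoint band (t0 t : nat) : nat :=
  match t with
  | 0 => 0
  | t'.+1 => let v := band t0 t' in
             if (t0 < t'.+1) && (2 ^ v %| t'.+1) then v.+1 else v
  end.

Definition bandQ (t : nat) (Q : seq entry) (p : nat) : nat := band (et0 (Q_at Q p)) t.

Definition prev_rmin (Q : seq entry) (p : nat) : nat :=
  if p is p'.+1 then ermin (Q_at Q p') else 0.

Definition gQ (Q : seq entry) (p : nat) : int :=
  (ermin (Q_at Q p))%:Z - (prev_rmin Q p)%:Z.
Definition DeltaQ (Q : seq entry) (p : nat) : int :=
  (ermax (Q_at Q p))%:Z - (ermin (Q_at Q p))%:Z.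

(* seg(e_p) = positions segstart..p-1: maximal run of consecutive stored
   elements immediately before p with band value < band value of p. *)
Definition segstart (t : nat) (Q : seq entry) (p : nat) : nat :=
  p - find (fun e => ~~ (band (et0 e) t < bandQ t Q p)) (rev (take p Q)).

Definition gstarQ (t : nat) (Q : seq entry) (p : nat) : int :=
  gQ Q p + \sum_(segstart t Q p <= k < p) gQ Q k.

Definition del_step (t : nat) (Q Q' : seq entry) : Prop :=
  exists p, [/\ p.+1 < size Q,
     bandQ t Q p <= bandQ t Q p.+1,
     (gstarQ t Q p + gQ Q p.+1 + DeltaQ Q p.+1 <= t%:Z)%R &
     Q' = take (segstart t Q p) Q ++ drop p.+1 Q].

Inductive del_star (t : nat) : seq entry -> seq entry -> Prop :=
| del_refl Q : del_star t Q Q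
| del_trans Q1 Q2 Q3 : del_step t Q1 Q2 -> del_star t Q2 Q3 -> del_star t Q1 Q3.

Definition deletion_phase (t : nat) (Q Q' : seq entry) : Prop :=
  del_star t Q Q' /\ forall Q'', ~ del_step t Q' Q''.

(* t-th chunk (t >= 1) of the stream *)
Definition chunk (l : nat) (stream : nat -> T) (t : nat) : seq T :=
  [seq stream ((t.-1) * l + j) | j <- iota 0 l].

(* Qs t = content of QS after the deletion step of time step t. *)
Definition valid_run (l : nat) (stream : nat -> T) (Qs : nat -> seq entry) : Prop :=
  Qs 0 = [:: inf_entry] /\
  forall t, 0 < t ->
    deletion_phase t (insert_chunk t (chunk l stream t) (Qs t.-1)) (Qs t).

(* type-2 elements: stored e_p (not the last one) that are not type-1 *)
Definition num_type2 (t : nat) (Q : seq entry) : nat :=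
  count (fun p => ~~ (bandQ t Q p.+1 < bandQ t Q p)) (iota 0 (size Q).-1).

End GK.

From HB Require Import structures.
From mathcomp Require Import all_boot all_order all_algebra.
From mathcomp Require Import zify ring.
Import Order.TTheory GRing.Theory Num.Theory.
Set Implicit Arguments. Unset Strict Implicit. Unset Printing Implicit Defensive.

(* Each stored element e_i is summarised by its gap g_i, its uncertainty Delta_i and its
   arrival step t0.  The gaps of the stored elements of band at most v sum to at most the
   number of elements of band at most v seen so far: an insertion adds an element of band 0
   and gap 1, a deletion moves the gaps of e_i and seg(e_i) onto e_(i+1), whose band is at
   least theirs, and bands only grow with time.  Elements of band at most v arrived during
   the last 2^(v+1) steps, so this mass is at most 1 + l 2^(v+1).
   A type-2 element e_i with v(e_(i+1)) = v survived the deletion step, hence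
   g*_i + g_(i+1) > t - Delta_(i+1) >= t - t0(e_(i+1)) >= (2^v - 1)/2.  The windows
   seg(e_i), e_i, e_(i+1) of these elements contain only elements of band at most v and
   cover every position at most twice, so there are at most 12 l of them.  Bands at step t
   are at most log2 t + 1. *)

(** * Band values *)

Lemma bandS s t : band s t.+1 =
  if (s < t.+1) && (2 ^ band s t %| t.+1) then (band s t).+1 else band s t.
Proof. by []. Qed.

Lemma band_eq0 s t : t <= s -> band s t = 0.
Proof.
elim: t => [//|t IH] ts; rewrite bandS IH; last exact: ltnW.
by rewrite ltnNge ts.
Qed.

Lemma band_leS s t v : s <= t ->
  (band s t.+1 <= v) = (band s t < v + ~~ (2 ^ v %| t.+1)).
Proof.
move=> st; rewrite bandS ltnS st /=.
by case: (ltngtP (band s t) v) => [lt|gt|<-]; case: ifP; case: (2 ^ v %| t.+1); lia.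
Qed.

Lemma dvdn_add_leq d m n : 0 < d -> d %| m -> d %| n -> m < n -> m + d <= n.
Proof.
move=> d_gt0 /dvdnP[a ->] /dvdnP[b ->]; rewrite ltn_pmul2r // => ab.
by rewrite -mulSnr leq_pmul2r.
Qed.

(* [N] is the next step at which the band value increases. *)
Lemma band_next_step s t : s <= t -> exists N,
  [/\ 2 ^ band s t %| N, t < N <= t + 2 ^ band s t & N < s + 2 ^ (band s t).+1].
Proof.
elim: t => [|t IH] st.
  by exists 1; rewrite (_ : s = 0) //; lia.
have [ts|st'] := leqP s t; last first.
  rewrite (_ : s = t.+1) ?band_eq0 //; last by lia.
  by exists t.+2; rewrite expn0 expn1 dvd1n; split => //; lia.
have [N [dN /andP[tN Nt] Ns]] := IH ts.
rewrite bandS ltnS ts /=; set b := band s t in dN Nt Ns *.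
have b_gt0 : 0 < 2 ^ b by rewrite expn_gt0.
case: ifP => [dt|ndt]; last first.
  exists N; split => //; apply/andP; split; last by lia.
  by rewrite ltn_neqAle tN andbT; apply: contraFN ndt => /eqP->.
have NE : N = t.+1.
  by have := dvdn_add_leq b_gt0 dt dN; have := dvdn_add_leq b_gt0 dN dt; lia.
rewrite {}NE {tN Nt dN} in Ns.
have [d2|nd2] := boolP (2 ^ b.+1 %| t.+1).
  exists (t.+1 + 2 ^ b.+1); rewrite dvdn_addr //; split => //.
    by rewrite !expnS in Ns *; apply/andP; split; lia.
  by rewrite !expnS in Ns *; lia.
exists (t.+1 + 2 ^ b); split.
- move: dt nd2 => /dvdnP[x ->]; rewrite expnS -mulSnr !dvdn_pmul2r // !dvdn2 /=.
  by case: (odd x).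
- by rewrite expnS; apply/andP; split; lia.
- by rewrite !expnS in Ns *; lia.
Qed.

Lemma exp_bandS_ge s t : s <= t -> t - s + 2 <= 2 ^ (band s t).+1.
Proof. by move=> st; have [N [_ /andP[tN _] Ns]] := band_next_step st; lia. Qed.

(* [T] is the step at which the band value last increased. *)
Lemma band_last_step s t : s <= t -> band s t = 0 \/ exists2 T,
  T <= t & 2 ^ (band s t).-1 %| T /\ s + 2 ^ (band s t).-1 <= T.
Proof.
elim: t => [|t IH] st; first by left; rewrite band_eq0.
have [ts|st'] := leqP s t; last by left; rewrite band_eq0 //; lia.
rewrite bandS ltnS ts /=; set b := band s t in IH *.
case: ifP => [dt|_]; last first.
  by case: (IH ts) => [|[T Tt HT]]; [left | right; exists T => //; lia].
right; exists t.+1 => //; split=> //.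
case: (IH ts) => [b0|[T Tt [dT sT]]]; first by rewrite /= b0 expn0; lia.
move: dt dT sT; rewrite /b; case: (band s t) => [|c] /= dt dT sT.
  by rewrite expn0; lia.
have dt' : 2 ^ c %| t.+1 by apply: dvdn_trans dt; rewrite expnS dvdn_mull.
by have := dvdn_add_leq (expn_gt0 2 c) dT dt' Tt; rewrite expnS; lia.
Qed.

Lemma exp_band_le s t : s <= t -> 2 ^ band s t <= (t - s).*2.+1.
Proof.
move=> st; have [->|[T Tt]] := band_last_step st; first by rewrite expn0.
by case: (band s t) => [|b] /= [_ sT]; rewrite ?expn0 ?expnS; lia.
Qed.

Lemma sub_in_count (T : eqType) (a1 a2 : pred T) (s : seq T) :
  {in s, forall x, a1 x -> a2 x} -> count a1 s <= count a2 s.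
Proof.
move=> sub12; rewrite (@eq_in_count _ a1 (predI a1 a2)); last first.
  by move=> x xs /=; case a1x: (a1 x); rewrite // sub12.
by apply: sub_count => x /andP[].
Qed.

Lemma count_iota_le2 (C : pred nat) a m :
  (forall p q, C p -> C q -> p < q -> q = p.+1) -> count C (iota a m) <= 2.
Proof.
move=> adj; elim: m a => [|m IH] a //=.
case Ca: (C a) => /=; last exact: IH.
apply: (@leq_trans (count (pred1 a.+1) (iota a.+1 m)).+1).
  by rewrite ltnS; apply: sub_in_count => q; rewrite mem_iota => /andP[aq _] Cq;
     rewrite /= (adj a q).
by rewrite ltnS count_uniq_mem ?iota_uniq // leq_b1.
Qed.

Lemma count_lt_leq_mul (T : Type) (a : pred T) (f : T -> nat) (s : seq T) B K :
  (forall v, count (fun x => a x && (f x == v)) s <= B) ->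
  count (fun x => a x && (f x < K)) s <= K * B.
Proof.
move=> level; elim: K => [|K IH].
  by rewrite (eq_count (a2 := pred0)) ?count_pred0 // => x; rewrite ltn0 andbF.
have -> : count (fun x => a x && (f x < K.+1)) s =
          count (fun x => a x && (f x < K)) s + count (fun x => a x && (f x == K)) s.
  by elim: s {level IH} => //= x s ->; case: (a x); case: ltngtP => /=; lia.
by rewrite mulSn addnC leq_add.
Qed.

Lemma count_geq_iota k a m : count (fun s => k <= s) (iota a m) = a + m - maxn a k.
Proof. by elim: m a => [|m IH] a /=; [lia | rewrite IH; case: (leqP k a) => /=; lia]. Qed.

Local Open Scope ring_scope.

Lemma sum_const_count (I : Type) (r : seq I) (P : pred I) (c : nat) :
  \sum_(i <- r | P i) c%:Z = (count P r * c)%N%:Z.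
Proof. by rewrite big_const_seq iter_addr_0 -mulr_natr natz PoszM mulrC. Qed.

Lemma big_nat_restrict (R : nmodType) (F : nat -> R) a b n : (b <= n)%N ->
  \sum_(a <= k < b) F k = \sum_(0 <= k < n | (a <= k < b)%N) F k.
Proof.
move=> bn; rewrite (big_nat_widen _ _ _ _ _ bn) (big_nat_widenl _ _ _ _ _ (leq0n a)).
by apply: eq_bigl => k; rewrite andbC.
Qed.

Lemma sum_windows_le (R : numDomainType) (I J : eqType) (P : seq I) (r : seq J)
    (S : pred I) (W : I -> pred J) (A : pred J) (F : J -> R) (m : nat) :
  {in r, forall k, 0 <= F k} ->
  {in r, forall k, (count (fun p => S p && W p k) P <= m)%N} ->
  (forall p k, S p -> W p k -> A k) ->
  \sum_(p <- P | S p) \sum_(k <- r | W p k) F k <= m%:R * \sum_(k <- r | A k) F k.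
Proof.
move=> F_ge0 cover WA; rewrite (exchange_big_dep A) //= mulr_sumr.
rewrite big_seq_cond [leRHS]big_seq_cond; apply: ler_sum => k /andP[kr _].
by rewrite big_const_seq iter_addr_0 mulr_natl ler_wpMn2l ?F_ge0 ?cover.
Qed.

(** * The mass invariant *)

Record cell := Cell { cgap : int; cdelta : int; cbirth : nat }.

Definition triple_of_cell (x : cell) := (cgap x, cdelta x, cbirth x).
Definition cell_of_triple (y : int * int * nat) := Cell y.1.1 y.1.2 y.2.
Lemma triple_of_cellK : cancel triple_of_cell cell_of_triple. Proof. by case. Qed.
HB.instance Definition _ := Equality.copy cell (can_type triple_of_cellK).

(* A new element gets Delta = g + Delta - 1 of its successor, which is below G <= t0. *)
Definition cell_ok (G t : nat) (x : cell) : bool :=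
  [&& (0 : int) <= cgap x, cgap x + cdelta x <= G%:Z,
      cdelta x < (maxn (cbirth x) 1)%:Z & (cbirth x <= t)%N].

Definition band_mass (t v : nat) (V : seq cell) : int :=
  \sum_(x <- V | (band (cbirth x) t <= v)%N) cgap x.

(* Elements of chunks 1..tc, and the sentinel +oo of step 0, of band at most v at step t. *)
Definition arrivals (l t tc v : nat) : nat :=
  ((band 0 t <= v) + l * count (fun s => band s t <= v) (iota 1 tc))%N.

(* [G] bounds g + Delta, [t] is the current step, [tc] the number of completed chunks and
   [k] the number of elements of the current chunk inserted so far. *)
Definition summary_inv (l G t tc k : nat) (V : seq cell) : Prop :=
  all (cell_ok G t) V /\ forall v, band_mass t v V <= (arrivals l t tc v + k)%:Z.

Lemma band_mass_cat t v A B :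
  band_mass t v (A ++ B) = band_mass t v A + band_mass t v B.
Proof. by rewrite /band_mass big_cat. Qed.

Lemma band_mass_cons t v x B : band_mass t v (x :: B) =
  (if (band (cbirth x) t <= v)%N then cgap x else 0) + band_mass t v B.
Proof. by rewrite /band_mass big_cons; case: ifP; rewrite ?add0r. Qed.

Lemma summary_inv_init l : summary_inv l 1 0 0 0 [:: Cell 1 0 0].
Proof. by split=> // v; rewrite /band_mass /arrivals big_seq1 /=; lia. Qed.

Lemma summary_inv_widen l G G' t tc k V :
  (G <= G')%N -> summary_inv l G t tc k V -> summary_inv l G' t tc k V.
Proof.
move=> GG' [ok mass]; split=> //; apply: sub_all ok => x /and4P[? ? ? ?].
by apply/and4P; split=> //; lia.
Qed.

Lemma summary_inv_insert l G t tc k A B (d : int) :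
  (G <= t)%N -> d < G%:Z -> summary_inv l G t tc k (A ++ B) ->
  summary_inv l G t tc k.+1 (A ++ Cell 1 d t :: B).
Proof.
move=> Gt dG [ok mass]; move: ok; rewrite !all_cat /= => /andP[okA okB].
split; first by rewrite all_cat /= okA okB andbT /cell_ok /=; lia.
move=> v; have := mass v; rewrite !band_mass_cat band_mass_cons band_eq0 //=.
by rewrite PoszD; lia.
Qed.

Lemma summary_inv_merge l G t tc k A M h B :
  summary_inv l G t tc k (A ++ M ++ h :: B) ->
  all (fun x => band (cbirth x) t <= band (cbirth h) t)%N M ->
  cgap h + \sum_(x <- M) cgap x + cdelta h <= G%:Z ->
  summary_inv l G t tc k (A ++ Cell (cgap h + \sum_(x <- M) cgap x) (cdelta h) (cbirth h) :: B).
Proof.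
move=> [ok mass] Mband merged; move: ok; rewrite !all_cat /= => /and4P[okA okM okh okB].
have M_ge0 : 0 <= \sum_(x <- M) cgap x.
  by rewrite big_seq; apply: sumr_ge0 => x /(allP okM) /and4P[].
(* naming the merged gap keeps [/=] from unfolding the big sum below *)
set g := cgap h + _ in merged *.
split.
  rewrite all_cat /= okA okB andbT; move: okh => /and4P[g0 _ d_lt b_le].
  by apply/and4P; split=> //=; rewrite /g; lia.
move=> v; have := mass v; rewrite !band_mass_cat !band_mass_cons /=.
case: ifP => hv.
  suff -> : band_mass t v M = \sum_(x <- M) cgap x by rewrite /g; lia.
  rewrite /band_mass -big_filter; congr (\sum_(x <- _) _); apply/all_filterP.
  by apply: sub_all Mband => x /leq_trans; apply.
suff : 0 <= band_mass t v M by lia.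
by rewrite /band_mass big_seq_cond; apply: sumr_ge0 => x /andP[/(allP okM) /and4P[]].
Qed.

Lemma summary_inv_tick l G t tc k V :
  (tc <= t)%N -> summary_inv l G t tc k V -> summary_inv l G t.+1 tc k V.
Proof.
move=> tct [ok mass]; split.
  by apply: sub_all ok => x /and4P[? ? ? ?]; apply/and4P; split=> //; lia.
move=> v; set w := (v + ~~ (2 ^ v %| t.+1))%N.
have -> : band_mass t.+1 v V = \sum_(x <- V | (band (cbirth x) t < w)%N) cgap x.
  rewrite /band_mass big_seq_cond [RHS]big_seq_cond; apply: eq_bigl => x.
  by case xV: (x \in V); rewrite //= band_leS //; case/and4P: (allP ok x xV).
have -> : arrivals l t.+1 tc v =
    ((band 0 t < w) + l * count (fun s => band s t < w) (iota 1 tc))%N.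
  rewrite /arrivals band_leS //; congr (_ + l * _)%N.
  by apply: eq_in_count => s; rewrite mem_iota => /andP[_ s_le]; rewrite band_leS //; lia.
case: w => [|w]; last exact: mass w.
by rewrite big_pred0.
Qed.

Lemma summary_inv_close_chunk l G t tc k V :
  (t <= tc.+1)%N -> summary_inv l G t tc (k + l) V -> summary_inv l G t tc.+1 k V.
Proof.
move=> ttc [ok mass]; split=> // v.
suff -> : (arrivals l t tc.+1 v + k = arrivals l t tc v + (k + l))%N by [].
rewrite /arrivals -[tc.+1]addn1 iotaD count_cat /= (@band_eq0 (1 + tc) t) ?add1n //; lia.
Qed.

Lemma arrivals_le l t v : (arrivals l t t v <= 1 + l * 2 ^ v.+1)%N.
Proof.
rewrite /arrivals leq_add ?leq_b1 // leq_mul2l; apply/orP; right.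
apply: (@leq_trans (count (fun s => t.+2 - 2 ^ v.+1 <= s)%N (iota 1 t))).
  apply: sub_in_count => s; rewrite mem_iota => /andP[_ st] bs.
  have := @exp_bandS_ge s t ltac:(lia).
  have : (2 ^ (band s t).+1 <= 2 ^ v.+1)%N by rewrite leq_exp2l.
  lia.
by rewrite count_geq_iota; lia.
Qed.

Section Cells.
Variables (disp : Order.disp_t) (T : orderType disp).
Implicit Types (Q R S : seq (entry T)) (e : entry T).

(* [c] is rmin of the entry preceding [Q]. *)
Fixpoint cells_from (c : nat) Q : seq cell :=
  if Q is e :: Q' then
    Cell ((ermin e)%:Z - c%:Z) ((ermax e)%:Z - (ermin e)%:Z) (et0 e) :: cells_from (ermin e) Q'
  else [::].

Definition cells Q := cells_from 0 Q.

Lemma size_cells_from c Q : size (cells_from c Q) = size Q.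
Proof. by elim: Q c => //= e Q IH c; rewrite IH. Qed.

Lemma cells_from_cat c R S :
  cells_from c (R ++ S) = cells_from c R ++ cells_from (last c (map (@ermin _ T) R)) S.
Proof. by elim: R c => //= e R IH c; rewrite IH. Qed.

Lemma cells_from_succ c R :
  cells_from c.+1 [seq Entry (ev e) (ermin e).+1 (ermax e).+1 (et0 e) | e <- R] =
  cells_from c R.
Proof. by elim: R c => //= e R IH c; rewrite IH; congr (Cell _ _ _ :: _); lia. Qed.

Lemma sum_cgap_cells_from c R :
  \sum_(x <- cells_from c R) cgap x = (last c (map (@ermin _ T) R))%:Z - c%:Z.
Proof.
elim: R c => [|e R IH] c /=; first by rewrite big_nil subrr.
by rewrite big_cons IH /=; ring.
Qed.

Lemma map_cbirth_cells_from c R : map cbirth (cells_from c R) = map (@et0 _ T) R.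
Proof. by elim: R c => //= e R IH c; rewrite IH. Qed.

Lemma nth_cells_from c Q k : (k < size Q)%N ->
  nth (Cell 0 0 0) (cells_from c Q) k =
  Cell ((ermin (Q_at Q k))%:Z - (if k is k'.+1 then ermin (Q_at Q k') else c)%:Z)
       (DeltaQ Q k) (et0 (Q_at Q k)).
Proof. by elim: Q c k => //= e Q IH c [|k] //= kQ; rewrite IH //; case: k kQ. Qed.

Lemma cellsE Q :
  cells Q = [seq Cell (gQ Q k) (DeltaQ Q k) (et0 (Q_at Q k)) | k <- iota 0 (size Q)].
Proof.
apply: (@eq_from_nth _ (Cell 0 0 0)); first by rewrite size_map size_iota size_cells_from.
move=> k; rewrite size_cells_from => kQ.
by rewrite nth_cells_from // (nth_map 0%N) ?size_iota // nth_iota //; case: k kQ.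
Qed.

Lemma last_rmin_take Q b : (b <= size Q)%N ->
  last 0%N (map (@ermin _ T) (take b Q)) = prev_rmin Q b.
Proof.
case: b => [|b] bQ; first by rewrite take0.
rewrite -(nth_last 0%N) size_map size_takel // (nth_map (dflt_entry T)) ?size_takel //.
by rewrite nth_take.
Qed.

Lemma last_rmin_drop_take Q a b : (a <= b <= size Q)%N ->
  last (prev_rmin Q a) (map (@ermin _ T) (drop a (take b Q))) = prev_rmin Q b.
Proof.
move=> /andP[ab bQ]; rewrite -last_rmin_take ?(leq_trans ab) // -last_cat -map_cat.
by rewrite -(take_takel Q ab) cat_take_drop last_rmin_take.
Qed.

Lemma cells_insert (t : nat) (x : T) Q : exists (A B : seq cell) (d : int),
  [/\ cells Q = A ++ B, cells (insert_elem t x Q) = A ++ Cell 1 d t :: B &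
      d <= 0 \/ exists (h : cell) B', B = h :: B' /\ d = cgap h + cdelta h - 1].
Proof.
rewrite /insert_elem; set i := find (gtx x) Q.
have iQ : (i <= size Q)%N by apply: find_size.
exists (cells (take i Q)), (cells_from (prev_rmin Q i) (drop i Q)),
  ((ermax (Q_at Q i))%:Z - (prev_rmin Q i).+1%:Z); split.
- by rewrite -{1}(cat_take_drop i Q) /cells cells_from_cat last_rmin_take.
- rewrite /cells cells_from_cat last_rmin_take //= cells_from_succ.
  by congr (_ ++ Cell _ _ _ :: _); rewrite /prev_rmin; case: (i); lia.
- have [iQ'|iQ'] := ltnP i (size Q); last by left; rewrite /Q_at nth_default //=; lia.
  right; rewrite (drop_nth (dflt_entry T) iQ') /=; do 2 eexists; split; first by [].
  by rewrite /Q_at /=; lia.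
Qed.

Lemma summary_inv_insert_elem l G t tc k x Q : (0 < G <= t)%N ->
  summary_inv l G t tc k (cells Q) -> summary_inv l G t tc k.+1 (cells (insert_elem t x Q)).
Proof.
move=> /andP[G_gt0 Gt]; have [A [B [d [-> -> hd]]]] := cells_insert t x Q.
move=> inv; apply: (summary_inv_insert Gt _ inv).
case: hd => [|[h [B' [EB ->]]]]; first by lia.
by case: inv => + _; rewrite EB all_cat /= => /and3P[_ /and4P[_ ? _ _] _]; lia.
Qed.

Lemma summary_inv_insert_chunk l G t tc k c Q : (0 < G <= t)%N ->
  summary_inv l G t tc k (cells Q) ->
  summary_inv l G t tc (k + size c) (cells (insert_chunk t c Q)).
Proof.
move=> Gt; elim: c k Q => [|x c IH] k Q inv; first by rewrite addn0.
by rewrite /= -addSnnS; apply: IH; apply: summary_inv_insert_elem.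
Qed.

Lemma sum_gQ Q a b : (a <= b)%N ->
  \sum_(a <= k < b) gQ Q k = (prev_rmin Q b)%:Z - (prev_rmin Q a)%:Z.
Proof.
move=> /subnK <-; elim: (b - a)%N => [|n IH]; first by rewrite add0n big_geq // subrr.
by rewrite addSn big_nat_recr ?leq_addl //= IH /gQ; ring.
Qed.

Lemma gstarQ_gQS t Q p : gstarQ t Q p + gQ Q p.+1 =
  (ermin (Q_at Q p.+1))%:Z - (prev_rmin Q (segstart t Q p))%:Z.
Proof. by rewrite /gstarQ sum_gQ ?leq_subr // /gQ /=; ring. Qed.

Lemma segment_band_lt t Q p k : (p <= size Q)%N -> (segstart t Q p <= k < p)%N ->
  (band (et0 (Q_at Q k)) t < bandQ t Q p)%N.
Proof.
move=> pQ /andP[sk kp]; move: sk; rewrite /segstart.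
set a := fun e => _; set L := rev (take p Q).
have sizeL : size L = p by rewrite size_rev size_takel.
have findp : (find a L <= p)%N by rewrite -sizeL find_size.
(* entry [k] of [Q] is entry [p.-1 - k] of [L] *)
move=> sk; have := @before_find _ (dflt_entry T) a L (p.-1 - k) ltac:(lia).
rewrite /L nth_rev ?size_takel ?nth_take; try lia.
by rewrite (_ : (p - (p.-1 - k).+1 = k)%N); [move/negbFE | lia].
Qed.

Lemma segment_band_le t Q p k : (p.+1 < size Q)%N -> (bandQ t Q p <= bandQ t Q p.+1)%N ->
  (segstart t Q p <= k <= p.+1)%N -> (band (et0 (Q_at Q k)) t <= bandQ t Q p.+1)%N.
Proof.
move=> pQ bp /andP[sk kp]; case: (ltngtP k p) => [kp'|pk|-> //].
  by have := @segment_band_lt t Q p k (ltnW (ltnW pQ)); rewrite sk kp' => /(_ isT); lia.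
by rewrite (_ : k = p.+1) //; lia.
Qed.

Lemma cells_del_step t Q Q' : del_step t Q Q' -> exists A M h B,
  [/\ cells Q = A ++ M ++ h :: B,
      cells Q' = A ++ Cell (cgap h + \sum_(x <- M) cgap x) (cdelta h) (cbirth h) :: B,
      all (fun x => band (cbirth x) t <= band (cbirth h) t)%N M &
      cgap h + \sum_(x <- M) cgap x + cdelta h <= t%:Z].
Proof.
case=> p [pQ bp del ->]; set ss := segstart t Q p.
have ssp : (ss <= p)%N by apply: leq_subr.
set r := prev_rmin Q ss; set seg := drop ss (take p.+1 Q).
have last_seg : last r (map (@ermin _ T) seg) = ermin (Q_at Q p).
  by apply: last_rmin_drop_take; lia.
have dropQ : drop p.+1 Q = Q_at Q p.+1 :: drop p.+2 Q by apply: drop_nth.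
have splitQ : Q = take ss Q ++ seg ++ drop p.+1 Q.
  by rewrite catA -(take_takel Q (leqW ssp)) cat_take_drop cat_take_drop.
set h := Cell (gQ Q p.+1) (DeltaQ Q p.+1) (et0 (Q_at Q p.+1)).
have gap_merged :
    cgap h + \sum_(x <- cells_from r seg) cgap x = gstarQ t Q p + gQ Q p.+1.
  by rewrite gstarQ_gQS sum_cgap_cells_from last_seg /= /gQ /=; ring.
exists (cells (take ss Q)), (cells_from r seg), h,
  (cells_from (ermin (Q_at Q p.+1)) (drop p.+2 Q)); split.
- by rewrite {1}splitQ /cells !cells_from_cat last_rmin_take ?last_seg ?dropQ //; lia.
- rewrite /cells cells_from_cat last_rmin_take ?dropQ /=; last by lia.
  by rewrite gap_merged gstarQ_gQS.
- rewrite -(all_map cbirth (fun s => band s t <= band (cbirth h) t)%N) map_cbirth_cells_from.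
  rewrite all_map; apply/(all_nthP (dflt_entry T)) => i.
  rewrite size_drop size_takel => [iS|]; last by lia.
  rewrite nth_drop nth_take; last by lia.
  by apply: segment_band_le => //; lia.
- by rewrite gap_merged.
Qed.
End Cells.

Lemma summary_inv_del_step disp (T : orderType disp) l G t tc k (Q Q' : seq (entry T)) :
  (t <= G)%N -> del_step t Q Q' ->
  summary_inv l G t tc k (cells Q) -> summary_inv l G t tc k (cells Q').
Proof.
move=> tG /cells_del_step[A [M [h [B [-> -> Mband merged]]]]] inv.
by apply: summary_inv_merge inv Mband _; lia.
Qed.

Lemma summary_inv_del_star disp (T : orderType disp) l G t tc k (Q Q' : seq (entry T)) :
  (t <= G)%N -> del_star t Q Q' ->
  summary_inv l G t tc k (cells Q) -> summary_inv l G t tc k (cells Q').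
Proof.
by move=> tG; elim=> // Q1 Q2 Q3 step _ IH inv; apply/IH/(summary_inv_del_step tG step).
Qed.

Lemma summary_inv_run disp (T : orderType disp) l (stream : nat -> T) Qs :
  valid_run l stream Qs -> forall t, summary_inv l t.+1 t t 0 (cells (Qs t)).
Proof.
case=> Q0 step; elim=> [|t IH]; first by rewrite Q0; apply: summary_inv_init.
have [dels _] := step t.+1 isT; apply: summary_inv_del_star dels _ => //.
apply: (summary_inv_widen (leqnSn t.+1)); apply: summary_inv_close_chunk => //.
have Gt : (0 < t.+1 <= t.+1)%N by rewrite leqnn.
have := summary_inv_insert_chunk (chunk l stream t.+1) Gt (summary_inv_tick (leqnn t) IH).
by rewrite size_map size_iota add0n.
Qed.

(** * Counting type-2 elements *)

Section Type2Count.
Variables (disp : Order.disp_t) (T : orderType disp) (l G t : nat) (Q : seq (entry T)).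
Hypothesis l_gt0 : (0 < l)%N.
Hypothesis Qinv : summary_inv l G t t 0 (cells Q).
Hypothesis Qstable : forall Q', ~ del_step t Q Q'.

#[local] Arguments Q_at : simpl never.

Local Notation n := (size Q).
Local Notation b k := (bandQ t Q k).
Local Notation ss p := (segstart t Q p).

Definition type2 p := (p.+1 < n)%N && ~~ (b p.+1 < b p)%N.

Definition window_mass p := \sum_(0 <= k < n | (ss p <= k < p.+2)%N) gQ Q k.

Lemma cell_ok_nth k : (k < n)%N ->
  cell_ok G t (Cell (gQ Q k) (DeltaQ Q k) (et0 (Q_at Q k))).
Proof.
by case: Qinv; rewrite cellsE all_map => /allP ok _ kn; apply: ok; rewrite mem_iota.
Qed.

Lemma gQ_ge0 k : (k < n)%N -> 0 <= gQ Q k.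
Proof. by case/cell_ok_nth/and4P. Qed.

Lemma band_mass_le v : \sum_(0 <= k < n | (b k <= v)%N) gQ Q k <= (1 + l * 2 ^ v.+1)%N%:Z.
Proof.
have := Qinv.2 v; rewrite cellsE /band_mass big_map /index_iota subn0 addn0 => mass.
by apply: le_trans mass _; rewrite lez_nat arrivals_le.
Qed.

Lemma window_mass_eq p : (p.+1 < n)%N -> window_mass p = gstarQ t Q p + gQ Q p.+1.
Proof.
move=> pn; rewrite /window_mass -big_nat_restrict // sum_gQ ?gstarQ_gQS //.
by apply: leq_trans (leq_subr _ _) (leqW (leqnSn p)).
Qed.

Lemma window_mass_gt p : type2 p -> (2 ^ b p.+1)%N%:Z <= 2 * window_mass p.
Proof.
case/andP=> pn bp; have /and4P[_ _ /= d_lt /= s_le] := cell_ok_nth pn.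
have nodel : t%:Z < gstarQ t Q p + gQ Q p.+1 + DeltaQ Q p.+1.
  rewrite ltNge; apply/negP => del.
  by apply: Qstable; exists p; split; rewrite // leqNgt.
have := exp_band_le s_le; rewrite -mul2n -lez_nat window_mass_eq // /bandQ; lia.
Qed.

Lemma window_band p k : type2 p -> (ss p <= k < p.+2)%N -> (b k <= b p.+1)%N.
Proof. by case/andP=> pn bp kw; apply: segment_band_le pn _ _; [rewrite leqNgt | lia]. Qed.

Lemma window_overlap_le2 v k :
  (count (fun p => (type2 p && (b p.+1 == v)) && (ss p <= k < p.+2)) (iota 0 n.-1) <= 2)%N.
Proof.
apply: count_iota_le2 => p q /andP[/andP[_ /eqP bpv] kp].
move=> /andP[/andP[/andP[qn bq] /eqP bqv] kq] pq.
have [pq'|] := ltnP p.+1 q; last by lia.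
have : (ss q <= p.+1 < q)%N by rewrite pq' andbT; lia.
by move/(segment_band_lt (ltnW (ltnW qn))); rewrite /bandQ in bq bpv bqv *; lia.
Qed.

Lemma count_type2_level v :
  (count (fun p => type2 p && (b p.+1 == v)) (iota 0 n.-1) <= 12 * l)%N.
Proof.
set P := iota 0 n.-1; set S := fun p => type2 p && (b p.+1 == v).
have lower : (count S P * 2 ^ v)%N%:Z <= 2 * \sum_(p <- P | S p) window_mass p.
  rewrite -sum_const_count mulr_sumr; apply: ler_sum => p /andP[tp /eqP <-].
  exact: window_mass_gt.
have upper : \sum_(p <- P | S p) window_mass p <=
             2%:R * \sum_(0 <= k < n | (b k <= v)%N) gQ Q k.
  apply: sum_windows_le => [k|k _|p k /andP[tp /eqP <-]].
  - by rewrite mem_index_iota => /andP[_]; apply: gQ_ge0.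
  - exact: window_overlap_le2.
  - exact: window_band.
(* [lower], [upper] and [band_mass_le] give c 2^v <= 4 + 8 l 2^v. *)
have := band_mass_le v; have : (0 < 2 ^ v)%N by rewrite expn_gt0.
rewrite expnS => pow_gt0 mass.
have : (count S P * 2 ^ v <= 4 + 8 * l * 2 ^ v)%N by rewrite -lez_nat; lia.
by nia.
Qed.

Lemma bandQ_lt_log k : (k < n)%N -> (b k < (trunc_log 2 t).+2)%N.
Proof.
move=> kn; have /and4P[_ _ _ /= s_le] := cell_ok_nth kn.
have := exp_band_le s_le; have := @trunc_log_ltn 2 t isT; rewrite expnS -mul2n.
move=> t_lt b_le; rewrite -(@ltn_exp2l 2) // !expnS /bandQ; lia.
Qed.

Lemma num_type2_le : (num_type2 t Q <= 24 * l * (trunc_log 2 t).+1)%N.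
Proof.
set L := trunc_log 2 t.
rewrite /num_type2 (@eq_in_count _ _ (fun p => type2 p && (b p.+1 < L.+2)%N)); last first.
  move=> p; rewrite mem_iota => /andP[_ pn].
  by rewrite /type2 bandQ_lt_log ?andbT; [rewrite (_ : p.+1 < n)%N //|]; lia.
apply: leq_trans (count_lt_leq_mul _ count_type2_level) _.
by nia.
Qed.
End Type2Count.

Local Close Scope ring_scope.

Theorem mainTheorem7 :
  exists C : nat,
    forall (disp : Order.disp_t) (T : orderType disp) (l : nat)
           (stream : nat -> T) (Qs : nat -> seq (entry T)),
      0 < l -> valid_run l stream Qs ->
      forall t : nat, 0 < t ->
        num_type2 t (Qs t) <= C * l * (trunc_log 2 t).+1.
Proof.
exists 24 => disp T l stream Qs l_gt0 run t t_gt0.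
have [_ stable] := run.2 t t_gt0.
exact: num_type2_le l_gt0 (summary_inv_run run t) stable.
Qed.
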